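(* Let $G$ be a Polish group and let $\varphi\colon G \to [0,\infty]$ be a Baire measurable function which is not meagre (in the sense below). Then $(\varphi \diamond \varphi^{\diamond-1})^\circ(1_G) = 0$.
   Context: For functions $\varphi,\psi\colon G\to[0,\infty]$: $\varphi^{\diamond-1}(x) = \varphi(x^{-1})$ and $(\varphi \diamond \psi)(x) = \inf_{h \in G}\bigl(\varphi(h) + \psi(h^{-1}x)\bigr)$. A function $\varphi\colon G \to [0,\infty]$ is called meagre if there exists $r > 0$ such that $\{x \colon \varphi(x) < r\}$ is a meagre subset of $G$. The interior $\varphi^\circ$ of $\varphi$ is the function $\varphi^\circ(x) = \limsup_{y \to x} \varphi(y)$ (the least upper semi-continuous function which is pointwise $\geq \varphi$). *)

From HB Require Import structures.
From mathcomp Require Import all_boot all_order all_algebra.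
From mathcomp Require Import all_classical all_reals all_analysis.
Set Implicit Arguments. Unset Strict Implicit. Unset Printing Implicit Defensive.
Import Order.TTheory GRing.Theory Num.Theory.
Local Open Scope classical_set_scope.
Local Open Scope ring_scope.

Definition topological_group (G : topologicalType)
    (mul : G -> G -> G) (inv : G -> G) (one : G) : Prop :=
  [/\ (forall x y z, mul x (mul y z) = mul (mul x y) z),
      (forall x, mul one x = x /\ mul x one = x),
      (forall x, mul (inv x) x = one /\ mul x (inv x) = one),
      continuous (fun p : G * G => mul p.1 p.2) &
      continuous inv].

Definition separable_space (T : topologicalType) : Prop :=
  exists D : set T, countable D /\ dense D.

(* The space is
   given as a complete pseudometric type whose topology is the one induced by
   that (complete) pseudometric; Hausdorffness makes it a metric. *)
Definition polish_space (R : realType) (G : completePseudoMetricType R) : Prop :=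
  hausdorff_space G /\ separable_space G.

Definition nowhere_dense (T : topologicalType) (A : set T) : Prop :=
  (closure A)° = set0.

Definition meagre_set (T : topologicalType) (A : set T) : Prop :=
  exists F : nat -> set T, (forall n, nowhere_dense (F n)) /\
    A `<=` \bigcup_n F n.

Definition baire_property (T : topologicalType) (A : set T) : Prop :=
  exists U : set T, open U /\ meagre_set ((A `\` U) `|` (U `\` A)).

Definition baire_measurable (T : topologicalType) (R : realType)
    (f : T -> \bar R) : Prop :=
  forall B : set (\bar R), open B -> baire_property (f @^-1` B).

Definition meagre_fun (T : topologicalType) (R : realType)
    (f : T -> \bar R) : Prop :=
  exists r : R, 0 < r /\ meagre_set [set x | (f x < r%:E)%E].

Definition diamond_inv (G : Type) (R : realType) (inv : G -> G) (f : G -> \bar R) :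
  G -> \bar R := fun x => f (inv x).

Definition diamond (G : Type) (R : realType) (mul : G -> G -> G) (inv : G -> G)
    (f g : G -> \bar R) : G -> \bar R :=
  fun x => ereal_inf [set (f h + g (mul (inv h) x))%E | h in [set: G]].

(* interior phi^o(x) = limsup_{y -> x} phi(y)
   = inf over neighbourhoods U of x of sup_{y in U} phi(y)
   (the least upper semicontinuous function >= phi) *)
Definition usc_hull (T : topologicalType) (R : realType) (f : T -> \bar R) :
  T -> \bar R :=
  fun x => ereal_inf [set ereal_sup (f @` U) | U in [set U | nbhs x U]].

From HB Require Import structures.
From mathcomp Require Import all_boot all_order all_algebra.
From mathcomp Require Import all_classical all_reals all_analysis.
Import Order.TTheory GRing.Theory Num.Theory.
Local Open Scope classical_set_scope.
Local Open Scope ring_scope.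

(* Let A be the non-meagre Baire-measurable set {phi < e/2}.  By Pettis'
   argument A and its translate x A meet for every x close to 1: A is
   comeagre in some nonempty open U, and U meets x U near 1, so by the Baire
   category theorem some h lies in A and in x A.  Then
   (phi ◇ phi^{◇-1})(x) <= phi h + phi (x^-1 h) < e near 1, hence the
   upper semicontinuous hull at 1 is at most e, for every e > 0. *)

Section meagre_sets.
Context {T : topologicalType}.
Implicit Types A B M : set T.

Lemma nowhere_dense_open_subset {A V} :
  nowhere_dense A -> open V -> V `<=` closure A -> V = set0.
Proof.
move=> ndA oV VA; apply/seteqP; split => // x Vx.
have : (closure A)° x by apply: filterS VA _; exact: open_nbhs_nbhs.
by rewrite ndA.
Qed.

Lemma meagre_setS A B : A `<=` B -> meagre_set B -> meagre_set A.
Proof. by move=> AB [F [ndF BF]]; exists F; split => //; exact: subset_trans BF. Qed.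

Lemma meagre_setU A B : meagre_set A -> meagre_set B -> meagre_set (A `|` B).
Proof.
move=> [F [ndF AF]] [H [ndH BH]].
exists (fun n => if odd n then H n./2 else F n./2); split.
  by move=> n; case: ifP.
move=> x [/AF [k _ Fk]|/BH [k _ Hk]].
  by exists k.*2 => //; rewrite odd_double doubleK.
by exists k.*2.+1 => //=; rewrite odd_double /= uphalf_double.
Qed.

End meagre_sets.

Lemma nowhere_dense_preimage {T U : topologicalType} (g : T -> U) (h : U -> T)
    (A : set U) : continuous g -> continuous h -> cancel h g -> cancel g h ->
  nowhere_dense A -> nowhere_dense (g @^-1` A).
Proof.
move=> cg ch hK gK ndA; rewrite /nowhere_dense; set V := (closure _)°.
have ohV : open (h @^-1` V).
  by apply: open_comp; [move=> x _; exact: ch|exact: open_interior].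
have hV0 : h @^-1` V = set0.
  apply: (nowhere_dense_open_subset ndA ohV) => z /interior_subset Vhz B Bz.
  have /Vhz [y [Ay By]] : nbhs (h z) (g @^-1` B) by apply: cg; rewrite hK.
  by exists (g y).
apply/seteqP; split => // v Vv.
have : (h @^-1` V) (g v) by rewrite /= gK.
by rewrite hV0.
Qed.

Lemma meagre_set_preimage {T U : topologicalType} (g : T -> U) (h : U -> T)
    (M : set U) : continuous g -> continuous h -> cancel h g -> cancel g h ->
  meagre_set M -> meagre_set (g @^-1` M).
Proof.
move=> cg ch hK gK [F [ndF MF]].
exists (fun n => g @^-1` F n); split; last by move=> x /MF [k _ Fk]; exists k.
by move=> n; exact: nowhere_dense_preimage.
Qed.

Section baire_pseudometric.
Context {R : realType} {G : completePseudoMetricType R}.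
Implicit Types (A W : set G) (a b : G) (r s : R).

Lemma closure_ball_subset a r : 0 < r -> closure (ball a r) `<=` ball a (r + r).
Proof.
move=> r0 y /(_ (ball y r) (nbhsx_ballx y r r0)) [z [az yz]].
exact: (ball_triangle az (ball_sym yz)).
Qed.

Lemma nowhere_dense_ball_shrink A a r eps : nowhere_dense A -> 0 < r -> 0 < eps ->
  exists b s, [/\ 0 < s, s < eps & ball b (s + s) `<=` ball a r `&` ~` A].
Proof.
move=> ndA r0 eps0.
have : ~ ((ball a r)° `<=` closure A).
  move=> sub; have := nowhere_dense_open_subset ndA (@open_interior _ _) sub.
  by move/seteqP => [+ _] => /(_ a (nbhsx_ballx a r r0)).
move=> /existsNP[x /not_implyP[xin xA]].
have /nbhs_ballP[e e0 He] : nbhs x ((ball a r)° `&` ~` closure A).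
  apply: open_nbhs_nbhs; split => //.
  by apply: openI; [exact: open_interior|rewrite openC; exact: closed_closure].
pose s := Num.min (e / 2) (eps / 2).
have s0 : 0 < s by rewrite lt_min !divr_gt0.
exists x, s; split => //.
  by rewrite /s gt_min; apply/orP; right; rewrite ltr_pdivrMr // ltr_pMr // ltr1n.
move=> y yB; have /He [/interior_subset ay yA] : ball x e y.
  by apply: (le_ball _ yB); rewrite [leRHS](splitr e) lerD // ge_min lexx.
by split => // Ay; apply: yA; exact: subset_closure.
Qed.

Lemma nested_balls_common_point (c : nat -> G) (r : nat -> R) :
  (forall n, 0 < r n) -> (forall n, r n.+1 < n.+1%:R^-1) ->
  (forall n, ball (c n.+1) (r n.+1 + r n.+1) `<=` ball (c n) (r n)) ->
  exists l, forall n, ball (c n) (r n + r n) l.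
Proof.
move=> r0 r_small nested.
have nest n m : (n <= m)%N -> ball (c m) (r m) `<=` ball (c n) (r n).
  elim: m => [|m IH]; first by rewrite leqn0 => /eqP ->.
  rewrite leq_eqVlt => /orP[/eqP -> //|/IH]; apply: subset_trans => y yb.
  by apply/nested/(le_ball _ yb); rewrite lerDl ltW.
have c_near n : \forall m \near \oo, ball (c n) (r n) (c m).
  by exists n => // m /= nm; apply: (nest n m nm); exact: ballxx.
have : cvg (c @ \oo).
  apply: cauchy_cvg; apply: cauchy_exP => e e0.
  have [k ke] : exists k, k.+1%:R^-1 < e.
    exists (Num.truncn e^-1).
    by rewrite -ltf_pV2 ?(posrE,divr_gt0)// invrK truncnS_gt.
  exists (c k.+1); apply: filterS (c_near k.+1) => y; apply: le_ball.
  exact/ltW/(lt_trans (r_small k) ke).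
move=> /cvg_ex [l cl]; exists l => n.
apply: closure_ball_subset => //.
have closed_cl := @closed_closure _ (ball (c n) (r n)).
apply: (@closed_cvg _ _ \oo eventually_filter c _ closed_cl _ l cl).
by apply: filterS (c_near n) => y; exact: subset_closure.
Qed.

Lemma open_not_meagre {W} : open W -> W !=set0 -> ~ meagre_set W.
Proof.
move=> oW [w Ww] [F [ndF WF]].
have [r0 r00 Br0] : exists2 r0 : R, 0 < r0 & ball w (r0 + r0) `<=` W.
  have /nbhs_ballP[e e0 He] : nbhs w W by exact: open_nbhs_nbhs.
  by exists (e / 2); rewrite ?divr_gt0 // -splitr.
pose P n (ar bs : G * R) :=
  [/\ 0 < bs.2, bs.2 < n.+1%:R^-1 & ball bs.1 (bs.2 + bs.2) `<=` ball ar.1 ar.2 `&` ~` F n].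
(* The guard [0 < nar.2.2] makes [step] total, so that [choice] gives one
   function driving the recursive construction of the balls. *)
have step (nar : nat * (G * R)) : exists bs, 0 < nar.2.2 -> P nar.1 nar.2 bs.
  case: nar => n [a r] /=; have [r_gt0|] := ltP 0 r; last by exists (a, r).
  have eps0 : 0 < n.+1%:R^-1 :> R by rewrite invr_gt0.
  have [b [s [s0 s_small sub]]] := nowhere_dense_ball_shrink _ a _ _ (ndF n) r_gt0 eps0.
  by exists (b, s).
have [f Pf] := choice step.
pose fix ar n := if n is p.+1 then f (p, ar p) else (w, r0).
have ar_gt0 n : 0 < (ar n).2.
  by elim: n => [//|n IH] /=; have [] := Pf (n, ar n) IH.
have Pn n : P n (ar n) (ar n.+1) by exact: (Pf (n, ar n) (ar_gt0 n)).
have [l ball_l] : exists l, forall n, ball (ar n).1 ((ar n).2 + (ar n).2) l.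
  apply: nested_balls_common_point => // n; first by have [] := Pn n.
  by have [_ _ sub] := Pn n; move=> y /sub [].
have [k _ Fkl] := WF l (Br0 l (ball_l 0%N)).
have [_ _ sub] := Pn k.
by have [_] := sub l (ball_l k.+1).
Qed.

Lemma open_setD_meagre_neq0 {W M} : open W -> W !=set0 -> meagre_set M ->
  W `\` M !=set0.
Proof.
move=> oW W0 mM; apply: contrapT => /set0P/negP/negbNE/eqP WM0.
apply: (open_not_meagre oW W0); apply: meagre_setS mM => h Wh.
apply: contrapT => Mh; suff : (W `\` M) h by rewrite WM0.
by split.
Qed.

End baire_pseudometric.

Section topological_group_identities.
Context {G : topologicalType} {mul : G -> G -> G} {inv : G -> G} {one : G}.
Hypothesis Ggrp : topological_group mul inv one.

Lemma tg_mulKg c z : mul (inv c) (mul c z) = z.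
Proof.
by case: Ggrp => mulA mul1 mulV _ _; rewrite mulA (proj1 (mulV c)) (proj1 (mul1 z)).
Qed.

Lemma tg_mulKVg c z : mul c (mul (inv c) z) = z.
Proof.
by case: Ggrp => mulA mul1 mulV _ _; rewrite mulA (proj2 (mulV c)) (proj1 (mul1 z)).
Qed.

Lemma tg_inv_unique y z : mul y z = one -> z = inv y.
Proof.
case: Ggrp => mulA mul1 mulV _ _ yz.
by rewrite -(proj1 (mul1 z)) -(proj1 (mulV y)) -mulA yz (proj2 (mul1 _)).
Qed.

Lemma tg_inv1 : inv one = one.
Proof. by case: Ggrp => _ mul1 _ _ _; apply/esym/tg_inv_unique; case: (mul1 one). Qed.

Lemma tg_invMV h x : inv (mul (inv h) x) = mul (inv x) h.
Proof.
case: Ggrp => mulA mul1 mulV _ _; apply/esym/tg_inv_unique.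
by rewrite -mulA (mulA x) (proj2 (mulV x)) (proj1 (mul1 h)) (proj1 (mulV h)).
Qed.

Lemma tg_continuous_mull c : continuous (mul c).
Proof.
case: Ggrp => _ _ _ cmul _ y.
apply: (@continuous2_cvg _ _ _ _ (nbhs y) _ (fun=> c) id mul) => //.
  exact: (cmul (c, y)).
exact: cvg_cst.
Qed.

Lemma tg_continuous_mulVr u : continuous (fun x => mul (inv x) u).
Proof.
case: Ggrp => _ _ _ cmul cinv x.
apply: (@continuous2_cvg _ _ _ _ (nbhs x) _ inv (fun=> u) mul) => //.
  exact: (cmul (inv x, u)).
  exact: cinv.
exact: cvg_cst.
Qed.

End topological_group_identities.

Lemma pettis_translates_meet {R : realType} {G : completePseudoMetricType R}
    {mul : G -> G -> G} {inv : G -> G} {one : G} {A : set G} :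
  topological_group mul inv one -> baire_property A -> ~ meagre_set A ->
  \forall x \near one, exists h, A h /\ A (mul (inv x) h).
Proof.
move=> Ggrp [U [oU mM]] nmA; set M := _ `|` _ in mM.
have inA y : U y -> ~ M y -> A y.
  by move=> Uy My; apply: contrapT => nAy; apply: My; right.
have [u Uu] : U !=set0.
  apply/set0P/negP => /eqP U0; apply: nmA; apply: meagre_setS mM => y Ay.
  by left; split => //; rewrite U0.
have Uu_near : \forall x \near one, U (mul (inv x) u).
  apply: (tg_continuous_mulVr Ggrp u one).
  rewrite (tg_inv1 Ggrp); case: Ggrp => _ /(_ u) [-> _] _ _ _.
  exact: open_nbhs_nbhs.
apply: filterS Uu_near => x Uxu.
have oW : open (U `&` mul (inv x) @^-1` U).
  by apply: openI => //; apply: open_comp => // y _; exact: tg_continuous_mull Ggrp _ _.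
have mM' : meagre_set (M `|` mul (inv x) @^-1` M).
  apply: meagre_setU => //; apply: (meagre_set_preimage _ (mul x)) => //.
  - exact: tg_continuous_mull Ggrp _.
  - exact: tg_continuous_mull Ggrp _.
  - exact: tg_mulKg Ggrp x.
  - exact: tg_mulKVg Ggrp x.
have W0 : (U `&` mul (inv x) @^-1` U) !=set0 by exists u.
have [h [[Uh Uxh] hM']] := open_setD_meagre_neq0 oW W0 mM'.
by exists h; split; apply: inA => // hM; apply: hM'; [left|right].
Qed.

Section usc_hull.
Context {T : topologicalType} {R : realType}.
Implicit Type f : T -> \bar R.

Lemma usc_hull_ge f x : (f x <= usc_hull f x)%E.
Proof.
apply: le_ereal_inf_tmp => _ [U Ux <-]; apply: ereal_sup_ubound.
by exists x => //; exact: nbhs_singleton.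
Qed.

Lemma usc_hull_le {f x} {N : set T} {c : \bar R} : nbhs x N ->
  (forall y, N y -> (f y <= c)%E) -> (usc_hull f x <= c)%E.
Proof.
move=> Nx fc; apply: le_trans (ereal_inf_lbound _) _; first by exists N.
by apply: ge_ereal_sup => _ [y Ny <-]; exact: fc.
Qed.

End usc_hull.

Theorem lemma3p6 (R : realType) (G : completePseudoMetricType R)
  (mul : G -> G -> G) (inv : G -> G) (one : G)
  (phi : G -> \bar R) :
  polish_space G ->
  topological_group mul inv one ->
  (forall x, (0 <= phi x)%E) ->
  baire_measurable phi ->
  ~ meagre_fun phi ->
  usc_hull (diamond mul inv phi (diamond_inv inv phi)) one = 0%E.
Proof.
move=> _ Ggrp phi_ge0 phi_baire phi_nonmeagre.
apply/le_anti/andP; split; last first.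
  apply: le_trans (usc_hull_ge _ _); apply: le_ereal_inf_tmp => _ [h _ <-].
  exact: adde_ge0 (phi_ge0 _) (phi_ge0 _).
apply/lee_addgt0Pr => e e0; rewrite add0r.
pose A := [set x | (phi x < (e / 2)%:E)%E].
have A_baire : baire_property A by exact: (phi_baire _ (@open_ereal_lt_ereal _ (e / 2)%:E)).
have A_nonmeagre : ~ meagre_set A.
  by move=> mA; apply: phi_nonmeagre; exists (e / 2); rewrite divr_gt0.
apply: usc_hull_le (pettis_translates_meet Ggrp A_baire A_nonmeagre) _.
move=> x [h [Ah Axh]]; apply: le_trans (ereal_inf_lbound _) _; first by exists h.
rewrite /diamond_inv (tg_invMV Ggrp) (splitr e) EFinD.
exact/ltW/lteD.
Qed.
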